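(* Let $d$ be an integer and let $b,\alpha,\beta\in\mathbb{Z}_{\ge0}^n$ satisfy $\alpha_1\le\cdots\le\alpha_n=d$, $\beta_1\le\cdots\le\beta_n=d$, $\alpha_i\le\beta_i$ for all $i$, $\alpha_1=0$ and $\beta_1=b_1$. Let $I\subseteq S=K[x_1,\ldots,x_n]$ be the ideal generated by all monomials $x^u$ with $u\in\mathbb{Z}_{\ge0}^n$, $0\le u_i\le b_i$ and $\alpha_i\le u_1+\cdots+u_i\le\beta_i$ for $i=1,\ldots,n$ (the basic PLP-polymatroidal ideal of type $(\mathbf{0},b\mid\alpha,\beta)$). Then $\mathrm{soc}(I)$ is the basic PLP-polymatroidal ideal of type $$(\mathbf{0},(b_1-1,\ldots,b_n-1)\mid(\alpha_1,\ldots,\alpha_{n-1},\alpha_n-1),(\beta_1-1,\ldots,\beta_n-1)),$$ that is, $\mathrm{soc}(I)$ is the ideal generated by all monomials $x^v$ with $v\in\mathbb{Z}_{\ge0}^n$ satisfying $0\le v_i\le b_i-1$ for $i=1,\ldots,n$, $\alpha_i\le v_1+\cdots+v_i\le\beta_i-1$ for $i=1,\ldots,n-1$, and $v_1+\cdots+v_n=d-1$.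
   Context: $K$ is a field and $\mathfrak{m}=(x_1,\ldots,x_n)$. $I$ is a polymatroidal ideal generated in degree $d$ and has a linear resolution; $\mathrm{soc}(I)$ denotes the ideal generated by all monomials $w$ of degree $d-1$ with $x_iw\in I$ for all $i$, so that $(I:\mathfrak{m})=I+\mathrm{soc}(I)$. The PLP-polymatroidal ideal of type $(\mathbf{0},b'\mid\alpha',\beta')$ is the ideal generated by the monomials $x^v$ with $0\le v_i\le b'_i$ and $\alpha'_i\le v_1+\cdots+v_i\le\beta'_i$ for all $i$. *)

From mathcomp Require Import all_boot all_algebra.
From mathcomp Require Import mpoly.
Set Implicit Arguments. Unset Strict Implicit. Unset Printing Implicit Defensive.
Import GRing.Theory.
Local Open Scope ring_scope.

(* Monomials of S = K[x_1,...,x_n] are 'X_[m] for m : 'X_{1..n} (exponent vectors);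
   the variables x_1..x_n are 'X_i for i : 'I_n (0-based indexing). *)

Definition mono_ideal (K : fieldType) (n : nat) (G : 'X_{1..n} -> Prop)
  : {mpoly K[n]} -> Prop :=
  fun p => exists s : seq ({mpoly K[n]} * 'X_{1..n}),
    (forall c, c \in s -> G c.2) /\ p = \sum_(c <- s) c.1 * 'X_[c.2].

(* soc(I) for an ideal I generated in degree d: the ideal generated by all
   monomials w of degree d-1 with x_i w in I for all i.  "deg w = d - 1" is
   written (mdeg w).+1 = d, which is the integer condition (no truncation). *)
Definition soc (K : fieldType) (n : nat) (I : {mpoly K[n]} -> Prop) (d : nat)
  : {mpoly K[n]} -> Prop :=
  mono_ideal (fun w : 'X_{1..n} =>
    (mdeg w).+1 = d /\ forall i : 'I_n, I ('X_i * 'X_[w])).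

(* prefix sum u_1 + ... + u_i (i 0-based here, so includes index i) *)
Definition psum (n : nat) (u : 'X_{1..n}) (i : 'I_n) : nat :=
  (\sum_(j < n | (j <= i)%N) u j)%N.

Definition plp_gen (n : nat) (b alpha beta : 'I_n -> nat) (u : 'X_{1..n}) : Prop :=
  forall i : 'I_n, (u i <= b i)%N /\ (alpha i <= psum u i <= beta i)%N.

From mathcomp Require Import all_boot all_algebra.
From mathcomp Require Import mpoly.
Set Implicit Arguments. Unset Strict Implicit. Unset Printing Implicit Defensive.
Import GRing.Theory.
Local Open Scope ring_scope.

(* Since I is generated in degree d, a monomial w of degree d - 1 lies in
   soc(I) exactly when every x_i w is itself a generator of I: a generator
   dividing x_i w must equal it.  For the generator x_i w, the constraints at
   index i give w_i < b_i and w_1 + ... + w_i < beta_i, those of x_n w give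
   alpha_j <= w_1 + ... + w_j, and at index n both bounds equal
   d = deg(x_i w).  Conversely, these conditions make every x_i w a
   generator. *)

Section MonomialIdeals.

Variables (K : fieldType) (n : nat).
Implicit Types (G H : 'X_{1..n} -> Prop) (m g : 'X_{1..n}).

Lemma mono_ideal_ext G H :
  (forall m, G m <-> H m) -> forall p, mono_ideal (K:=K) G p <-> mono_ideal H p.
Proof.
by move=> GH p; split=> -[s [Gs ->]]; exists s; split=> // c /Gs /GH.
Qed.

Lemma mono_idealX_dvd G m :
  mono_ideal (K:=K) G 'X_[m] -> exists2 g, G g & (g <= m)%MM.
Proof.
move=> [s [Gs def_m]].
have [/hasP[c cs le_cm] | /hasPn not_le] := boolP (has (fun c => c.2 <= m)%MM s).
  by exists c.2; [apply: Gs | ].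
(* Otherwise x^m has coefficient 0 in every summand c.1 * x^(c.2). *)
suff : ('X_[m] : {mpoly K[n]})@_m = 0 by rewrite mcoeffX eqxx => /eqP; rewrite oner_eq0.
rewrite def_m raddf_sum /= big_seq big1 // => c cs.
apply/eqP; rewrite -[_ == 0]negbK -mcoeff_msupp (perm_mem (msuppMX _ _)).
by apply/mapP=> -[m' _ def_m']; move: (not_le c cs); rewrite def_m' lem_addr.
Qed.

Lemma lem_mdeg_eq g m : (g <= m)%MM -> mdeg g = mdeg m -> g = m.
Proof.
move=> le_gm deg_gm; rewrite -(submK le_gm).
suff /eqP : mdeg (m - g)%MM = 0%N by rewrite mdeg_eq0 => /eqP ->; rewrite add0m.
by apply/eqP; rewrite -(eqn_add2r (mdeg g)) -mdegD submK // deg_gm.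
Qed.

Lemma mono_idealX_homog G k m :
  (forall g, G g -> mdeg g = k) -> mdeg m = k ->
  mono_ideal (K:=K) G 'X_[m] <-> G m.
Proof.
move=> degG deg_m; split; last first.
  move=> Gm; exists [:: (1, m)]; rewrite big_seq1 mul1r; split=> // c.
  by rewrite mem_seq1 => /eqP ->.
by case/mono_idealX_dvd=> g Gg le_gm; rewrite -(lem_mdeg_eq le_gm) // degG.
Qed.

End MonomialIdeals.

Section PrefixSums.

Variable n : nat.
Implicit Types (u v : 'X_{1..n}) (i k : 'I_n).

Lemma psum_last u i : i.+1 = n -> psum u i = mdeg u.
Proof.
move=> i_last; rewrite /psum mdegE; apply: eq_bigl => j.
by rewrite -ltnS i_last ltn_ord.
Qed.

Lemma psumD u v i : psum (u + v)%MM i = (psum u i + psum v i)%N.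
Proof. by rewrite /psum -big_split; apply: eq_bigr => j _; rewrite mnmDE. Qed.

Lemma psum1 k i : psum U_(k)%MM i = (k <= i)%N.
Proof.
rewrite /psum; case: (leqP k i) => [le_ki | lt_ik].
  rewrite (bigD1 k) //= mnm1E eqxx big1 // => j /andP[_].
  by rewrite mnm1E eq_sym => /negbTE ->.
rewrite big1 // => j le_ji; rewrite mnm1E.
by case: eqP le_ji => // <-; rewrite leqNgt lt_ik.
Qed.

End PrefixSums.

Section PLPSocle.

Variables (n d : nat) (b alpha beta : 'I_n -> nat).
Hypothesis n_gt0 : (0 < n)%N.
Hypothesis alpha_last : forall i : 'I_n, i.+1 = n -> alpha i = d.
Hypothesis beta_last : forall i : 'I_n, i.+1 = n -> beta i = d.

Definition plp_soc_gen (v : 'X_{1..n}) : Prop :=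
  (forall i : 'I_n, (v i < b i)%N) /\
  (forall i : 'I_n, (i.+1 < n)%N -> (alpha i <= psum v i < beta i)%N) /\
  (mdeg v).+1 = d.

Let last_ord : 'I_n := Ordinal (etrans (ltn_predL n) n_gt0).

Let last_ordE : last_ord.+1 = n.
Proof. exact: ltn_predK (etrans (ltn_predL n) n_gt0). Qed.

Lemma plp_gen_mdeg u : plp_gen b alpha beta u -> mdeg u = d.
Proof.
move=> /(_ last_ord) [_]; rewrite psum_last // alpha_last // beta_last //.
by move=> le_d; apply/eqP; rewrite eqn_leq andbC.
Qed.

Lemma plp_gen_addU w :
  plp_soc_gen w -> forall i : 'I_n, plp_gen b alpha beta (U_(i) + w)%MM.
Proof.
move=> [w_lt_b [w_psum deg_w]] i j; split.
  by rewrite mnmDE mnm1E; case: (i == j); rewrite ?add1n ?add0n // ltnW.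
case: (ltnP j.+1 n) => [j_lt | j_ge].
  have /andP[le_aw lt_wb] := w_psum j j_lt.
  rewrite psumD psum1; case: (i <= j)%N; rewrite ?add1n ?add0n.
    by rewrite lt_wb leqW.
  by rewrite le_aw ltnW.
have j_last : j.+1 = n by apply/eqP; rewrite eqn_leq j_ge ltn_ord.
rewrite psum_last // mdegD mdeg1 add1n deg_w.
by rewrite alpha_last // beta_last // leqnn.
Qed.

Lemma plp_soc_gen_of_addU w :
  (mdeg w).+1 = d -> (forall i : 'I_n, plp_gen b alpha beta (U_(i) + w)%MM) ->
  plp_soc_gen w.
Proof.
move=> deg_w gen_Uw; split; last split=> // i i_lt.
  by move=> i; have [] := gen_Uw i i; rewrite mnmDE mnm1E eqxx add1n.
have not_last : (last_ord <= i)%N = false.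
  by apply/negbTE; rewrite -ltnNge -ltnS last_ordE.
have [_ /andP[ge_alpha _]] := gen_Uw last_ord i.
have [_ /andP[_ lt_beta]] := gen_Uw i i.
move: ge_alpha lt_beta; rewrite !psumD !psum1 not_last leqnn add0n add1n.
by move=> -> ->.
Qed.

End PLPSocle.

Theorem proposition3p3 (K : fieldType) (n : nat) (d : nat)
  (b alpha beta : 'I_n -> nat)
  (hn : (0 < n)%N)
  (halpha_mono : forall i j : 'I_n, (i <= j)%N -> (alpha i <= alpha j)%N)
  (hbeta_mono : forall i j : 'I_n, (i <= j)%N -> (beta i <= beta j)%N)
  (halpha_last : forall i : 'I_n, (i.+1 = n)%N -> alpha i = d)
  (hbeta_last : forall i : 'I_n, (i.+1 = n)%N -> beta i = d)
  (halpha_beta : forall i : 'I_n, (alpha i <= beta i)%N)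
  (halpha_first : forall i : 'I_n, (i : nat) = 0%N -> alpha i = 0%N)
  (hbeta_first : forall i : 'I_n, (i : nat) = 0%N -> beta i = b i) :
  forall p : {mpoly K[n]},
    soc (mono_ideal (plp_gen b alpha beta)) d p <->
    mono_ideal (fun v : 'X_{1..n} =>
      (forall i : 'I_n, (v i < b i)%N) /\
      (forall i : 'I_n, (i.+1 < n)%N -> (alpha i <= psum v i < beta i)%N) /\
      (mdeg v).+1 = d) p.
Proof.
apply: mono_ideal_ext => w.
have gen_XUw (i : 'I_n) : (mdeg w).+1 = d ->
    mono_ideal (K:=K) (plp_gen b alpha beta) ('X_i * 'X_[w]) <->
    plp_gen b alpha beta (U_(i) + w)%MM.
  move=> deg_w; rewrite -mpolyXD; apply: mono_idealX_homog.
    exact: plp_gen_mdeg hn halpha_last hbeta_last.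
  by rewrite mdegD mdeg1.
split=> [[deg_w in_I] | soc_w].
  by apply: plp_soc_gen_of_addU => // i; apply/(gen_XUw i deg_w).
have deg_w := soc_w.2.2; split=> // i.
by apply/(gen_XUw i deg_w); exact: (plp_gen_addU halpha_last hbeta_last soc_w).
Qed.
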